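(* The vector field $\xi$ is Killing with respect to $g$ (i.e. $\mathcal L_\xi g=0$, so that $(L,\varphi,\xi,\eta,g)$ is a K-contact B-metric manifold) if and only if $(L,\varphi,\xi,\eta,g)\in\mathcal{F}_1\oplus\mathcal{F}_8\oplus\mathcal{F}_{10}$.
   Context: Let $L$ be a 3-dimensional real connected Lie group with Lie algebra $\mathfrak l$, and let $\{E_0,E_1,E_2\}$ be a basis of left-invariant vector fields, with $[E_i,E_j]=C_{ij}^kE_k$. Define the left-invariant almost contact structure $(\varphi,\xi,\eta)$ by $\varphi E_0=0$, $\varphi E_1=E_2$, $\varphi E_2=-E_1$, $\xi=E_0$, $\eta(E_0)=1$, $\eta(E_1)=\eta(E_2)=0$, and the left-invariant pseudo-Riemannian metric $g$ by $g(E_0,E_0)=g(E_1,E_1)=-g(E_2,E_2)=1$, $g(E_i,E_j)=0$ for $i\neq j$. Let $\nabla$ be the Levi-Civita connection of $g$, $F(x,y,z)=g((\nabla_x\varphi)y,z)$, and $F_{ijk}=F(E_i,E_j,E_k)$. The manifold belongs to $\mathcal{F}_1\oplus\mathcal{F}_8\oplus\mathcal{F}_{10}$ iff all $F_{ijk}$ vanish except possibly $F_{111}=F_{122}$, $F_{211}=F_{222}$, $F_{101}=F_{110}=F_{202}=F_{220}$, and $F_{011}=F_{022}$. *)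

(* real numbers. Everything is left-invariant, so the
   structure is encoded on the Lie algebra in the basis {E0,E1,E2}. *)
From Stdlib Require Import Reals.
Open Scope R_scope.

Inductive I3 : Type := e0 | e1 | e2.

Definition sum3 (f : I3 -> R) : R := f e0 + f e1 + f e2.

(* left-invariant vector fields = components in the basis E0,E1,E2 *)
Definition V : Type := I3 -> R.

Definition E (i : I3) : V := fun k =>
  match i, k with
  | e0, e0 | e1, e1 | e2, e2 => 1
  | _, _ => 0
  end.

Definition vsub (x y : V) : V := fun k => x k - y k.

(* structure constants: C i j k = C_{ij}^k, i.e. [E_i,E_j] = sum_k C_{ij}^k E_k *)
Definition bracket (C : I3 -> I3 -> I3 -> R) (x y : V) : V :=
  fun k => sum3 (fun i => sum3 (fun j => x i * y j * C i j k)).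

Definition is_Lie (C : I3 -> I3 -> I3 -> R) : Prop :=
  (forall i j k, C i j k = - C j i k) /\
  (forall i j l m,
     sum3 (fun k => C i j k * C k l m + C j l k * C k i m + C l i k * C k j m) = 0).

Definition g (x y : V) : R := x e0 * y e0 + x e1 * y e1 - x e2 * y e2.

Definition phi (x : V) : V := fun k =>
  match k with
  | e0 => 0
  | e1 => - x e2
  | e2 => x e1
  end.

Definition xi : V := E e0.
Definition eta (x : V) : R := x e0.

(* A left-invariant connection is given by nab i j = nabla_{E_i} E_j,
   extended bilinearly to left-invariant vector fields. *)
Definition nabla (nab : I3 -> I3 -> V) (x y : V) : V :=
  fun k => sum3 (fun i => sum3 (fun j => x i * y j * nab i j k)).

(* Levi-Civita: torsion-free and metric (g(E_j,E_k) is constant, so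
   E_i g(E_j,E_k) = 0) on the basis of left-invariant fields. *)
Definition is_LeviCivita (C : I3 -> I3 -> I3 -> R) (nab : I3 -> I3 -> V) : Prop :=
  (forall i j k, nab i j k - nab j i k = bracket C (E i) (E j) k) /\
  (forall i j k, g (nab i j) (E k) + g (E j) (nab i k) = 0).

Definition Fijk (nab : I3 -> I3 -> V) (i j k : I3) : R :=
  g (vsub (nabla nab (E i) (phi (E j))) (phi (nabla nab (E i) (E j)))) (E k).

(* (L_xi g)(X,Y) = xi(g(X,Y)) - g([xi,X],Y) - g(X,[xi,Y]); for
   left-invariant X,Y the first term vanishes. *)
Definition Lie_xi_g (C : I3 -> I3 -> I3 -> R) (x y : V) : R :=
  - g (bracket C xi x) y - g x (bracket C xi y).

Definition xi_Killing (C : I3 -> I3 -> I3 -> R) : Prop :=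
  forall i j, Lie_xi_g C (E i) (E j) = 0.

(* the possibly nonzero components in F1 + F8 + F10 *)
Definition allowed (i j k : I3) : bool :=
  match i, j, k with
  | e1, e1, e1 | e1, e2, e2 | e2, e1, e1 | e2, e2, e2
  | e1, e0, e1 | e1, e1, e0 | e2, e0, e2 | e2, e2, e0
  | e0, e1, e1 | e0, e2, e2 => true
  | _, _, _ => false
  end.

Definition in_F1_F8_F10 (F : I3 -> I3 -> I3 -> R) : Prop :=
  (forall i j k, allowed i j k = false -> F i j k = 0) /\
  F e1 e1 e1 = F e1 e2 e2 /\
  F e2 e1 e1 = F e2 e2 e2 /\
  F e1 e0 e1 = F e1 e1 e0 /\ F e1 e1 e0 = F e2 e0 e2 /\ F e2 e0 e2 = F e2 e2 e0 /\
  F e0 e1 e1 = F e0 e2 e2.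

(* Both conditions are statements about the endomorphism X |-> nabla_X xi alone.
   For the Levi-Civita connection (L_xi g)(X,Y) = g(nabla_X xi, Y) + g(X, nabla_Y xi),
   so xi is Killing iff nabla xi is g-skew.  On the other side, metricity makes every
   component F_{ijk} with j,k in {1,2} automatic (F_{i12} = F_{i21} = 0,
   F_{i22} = F_{i11}), and turns the components involving E0 into components of
   nabla_{E_i} xi; the defining relations of F1 + F8 + F10 then say exactly that
   nabla xi is g-skew. *)
From Stdlib Require Import Reals Lra.
Open Scope R_scope.

(* For a metric connection the E0-components of nabla_{E_i} xi vanish, so these are
   the only constraints left in the g-skewness of X |-> nabla_X xi. *)
Definition nabla_xi_skew (nab : I3 -> I3 -> V) : Prop :=
  nab e0 e0 e1 = 0 /\ nab e0 e0 e2 = 0 /\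
  nab e1 e0 e1 = 0 /\ nab e2 e0 e2 = 0 /\ nab e1 e0 e2 = nab e2 e0 e1.

Section MetricConnection.

Variables (C : I3 -> I3 -> I3 -> R) (nab : I3 -> I3 -> V).

Hypothesis nab_metric : forall i j k, g (nab i j) (E k) + g (E j) (nab i k) = 0.

Lemma nab_xi_e0 (i : I3) : nab i e0 e0 = 0.
Proof. pose proof (nab_metric i e0 e0). unfold g, E in *; simpl in *; lra. Qed.

Ltac metric_at i :=
  pose proof (nab_metric i e0 e1); pose proof (nab_metric i e0 e2);
  pose proof (nab_metric i e1 e1); pose proof (nab_metric i e1 e2);
  pose proof (nab_metric i e2 e2).

Ltac compute_F i :=
  metric_at i; unfold Fijk, vsub, nabla, phi, g, E, sum3 in *; simpl in *; lra.

Lemma Fijk_i00 (i : I3) : Fijk nab i e0 e0 = 0.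
Proof. destruct i; unfold Fijk, vsub, nabla, phi, g, E, sum3; simpl; lra. Qed.

Lemma Fijk_i01 (i : I3) : Fijk nab i e0 e1 = nab i e0 e2.
Proof. destruct i; [compute_F e0 | compute_F e1 | compute_F e2]. Qed.

Lemma Fijk_i02 (i : I3) : Fijk nab i e0 e2 = nab i e0 e1.
Proof. destruct i; [compute_F e0 | compute_F e1 | compute_F e2]. Qed.

Lemma Fijk_i10 (i : I3) : Fijk nab i e1 e0 = nab i e0 e2.
Proof. destruct i; [compute_F e0 | compute_F e1 | compute_F e2]. Qed.

Lemma Fijk_i20 (i : I3) : Fijk nab i e2 e0 = nab i e0 e1.
Proof. destruct i; [compute_F e0 | compute_F e1 | compute_F e2]. Qed.

Lemma Fijk_i12 (i : I3) : Fijk nab i e1 e2 = 0.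
Proof. destruct i; [compute_F e0 | compute_F e1 | compute_F e2]. Qed.

Lemma Fijk_i21 (i : I3) : Fijk nab i e2 e1 = 0.
Proof. destruct i; [compute_F e0 | compute_F e1 | compute_F e2]. Qed.

Lemma Fijk_i22 (i : I3) : Fijk nab i e2 e2 = Fijk nab i e1 e1.
Proof. destruct i; [compute_F e0 | compute_F e1 | compute_F e2]. Qed.

Lemma in_F1_F8_F10_iff : in_F1_F8_F10 (Fijk nab) <-> nabla_xi_skew nab.
Proof.
  split.
  - intros [Hzero [_ [_ [_ [H110_202 _]]]]].
    rewrite Fijk_i10, Fijk_i02 in H110_202.
    pose proof (Hzero e0 e0 e1 eq_refl) as H001.
    pose proof (Hzero e0 e0 e2 eq_refl) as H002.
    pose proof (Hzero e1 e0 e2 eq_refl) as H102.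
    pose proof (Hzero e2 e0 e1 eq_refl) as H201.
    rewrite Fijk_i01 in H001, H201; rewrite Fijk_i02 in H002, H102.
    unfold nabla_xi_skew; auto.
  - intros (H002 & H001 & H101 & H202 & H102_201).
    repeat split;
      rewrite ?Fijk_i01, ?Fijk_i02, ?Fijk_i10, ?Fijk_i20, ?Fijk_i22; auto.
    intros i j k Hallowed.
    destruct i, j, k; try discriminate Hallowed;
      rewrite ?Fijk_i00, ?Fijk_i01, ?Fijk_i02, ?Fijk_i10, ?Fijk_i20,
              ?Fijk_i12, ?Fijk_i21; auto.
Qed.

Hypothesis nab_torsion_free :
  forall i j k, nab i j k - nab j i k = bracket C (E i) (E j) k.

(* [xi, X] = nabla_xi X - nabla_X xi, and the nabla_xi terms cancel by metricity. *)
Lemma Lie_xi_g_basis (i j : I3) :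
  Lie_xi_g C (E i) (E j) = g (nab i e0) (E j) + g (E i) (nab j e0).
Proof.
  pose proof (nab_metric e0 i j) as Hmetric.
  unfold Lie_xi_g, xi, g in *.
  rewrite <- !nab_torsion_free.
  lra.
Qed.

Lemma xi_Killing_iff : xi_Killing C <-> nabla_xi_skew nab.
Proof.
  unfold xi_Killing, nabla_xi_skew.
  setoid_rewrite Lie_xi_g_basis.
  pose proof (nab_xi_e0 e0); pose proof (nab_xi_e0 e1); pose proof (nab_xi_e0 e2).
  split.
  - intros HK.
    pose proof (HK e0 e1); pose proof (HK e0 e2);
      pose proof (HK e1 e1); pose proof (HK e2 e2); pose proof (HK e1 e2).
    unfold g, E in *; simpl in *; repeat split; lra.
  - intros (H002 & H001 & H101 & H202 & H102_201) i j.
    destruct i, j; unfold g, E; simpl; lra.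
Qed.

End MetricConnection.

Theorem theorem2p6 (C : I3 -> I3 -> I3 -> R) (nab : I3 -> I3 -> V)
  (HC : is_Lie C) (HLC : is_LeviCivita C nab) :
  xi_Killing C <-> in_F1_F8_F10 (Fijk nab).
Proof.
  (* Torsion-freeness and metricity suffice. *)
  destruct HLC as [Htorsion Hmetric].
  rewrite (xi_Killing_iff C nab Hmetric Htorsion).
  symmetry; exact (in_F1_F8_F10_iff nab Hmetric).
Qed.
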